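(* Let $\mathbb{E}$ be a regular category, $\Sigma$ a fibrational class of split epimorphisms, and suppose $\mathbb{E}$ is a $\Sigma$-Mal'tsev category. Let $f\colon X\to Y$ be a regular epimorphism and $S$ a $\Sigma$-relation on $X$. Then the direct image $f(S)$ of $S$ along $f$ is a transitive relation on $Y$. In particular, the direct image along a regular epimorphism of a $\Sigma$-equivalence relation is an equivalence relation.
   Context: A split epimorphism is a pair $(f,s)$ with $fs=1$. A class $\Sigma$ of split epimorphisms is fibrational if it contains all split epimorphisms $(f,s)$ with $f$ invertible and is stable under pullback along any morphism. A pair of morphisms with common codomain $Z$ is jointly extremally epic if it factors jointly through no non-invertible monomorphism into $Z$. $\mathbb{E}$ is $\Sigma$-Mal'tsev if for every split epimorphism $(f,s)\colon X\rightleftarrows Y$ in $\Sigma$ and every split epimorphism $(g,t)$ with $g\colon Y'\to Y$, letting $X'=Y'\times_YX$, $s'=(1_{Y'},sg)$, $\bar t=(tf,1_X)$, the pair $(s',\bar t)$ is jointly extremally epic. A $\Sigma$-relation is a reflexive relation $(d_0,d_1)\colon S\rightarrowtail X\times X$ with reflexivity $s_0$ such that $(d_0,s_0)\in\Sigma$; a $\Sigma$-equivalence relation is an equivalence relation which is a $\Sigma$-relation. The direct image $f(S)$ is the image (regular epi–mono factorization) of $(f\times f)\circ(d_0,d_1)\colon S\to Y\times Y$. *)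

Record Category := {
  Ob :> Type;
  Hom : Ob -> Ob -> Type;
  idm : forall A : Ob, Hom A A;
  comp : forall A B C : Ob, Hom B C -> Hom A B -> Hom A C;
  comp_idl : forall A B (f : Hom A B), comp A B B (idm B) f = f;
  comp_idr : forall A B (f : Hom A B), comp A A B f (idm A) = f;
  comp_assoc : forall A B C D (h : Hom C D) (g : Hom B C) (f : Hom A B),
      comp A C D h (comp A B C g f) = comp A B D (comp B C D h g) f
}.

Arguments Hom {c} _ _.
Arguments idm {c} A.
Arguments comp {c A B C} _ _.
Notation "g ∘ f" := (comp g f) (at level 40, left associativity).

Section Defs.
Context {C : Category}.

Definition is_mono {A B : C} (m : Hom A B) : Prop :=
  forall Z (u v : Hom Z A), m ∘ u = m ∘ v -> u = v.

Definition is_iso {A B : C} (f : Hom A B) : Prop :=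
  exists g : Hom B A, g ∘ f = idm A /\ f ∘ g = idm B.

Definition is_terminal (T : C) : Prop :=
  forall A : C, exists t : Hom A T, forall t' : Hom A T, t' = t.

Definition is_pullback {A B Z P : C} (f : Hom A Z) (g : Hom B Z)
    (p1 : Hom P A) (p2 : Hom P B) : Prop :=
  f ∘ p1 = g ∘ p2 /\
  forall Q (q1 : Hom Q A) (q2 : Hom Q B), f ∘ q1 = g ∘ q2 ->
    exists u : Hom Q P, p1 ∘ u = q1 /\ p2 ∘ u = q2 /\
      forall u' : Hom Q P, p1 ∘ u' = q1 -> p2 ∘ u' = q2 -> u' = u.

Definition is_coequalizer {A B Q : C} (u v : Hom A B) (q : Hom B Q) : Prop :=
  q ∘ u = q ∘ v /\
  forall Z (h : Hom B Z), h ∘ u = h ∘ v ->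
    exists k : Hom Q Z, k ∘ q = h /\ forall k' : Hom Q Z, k' ∘ q = h -> k' = k.

Definition is_regular_epi {B Q : C} (q : Hom B Q) : Prop :=
  exists (A : C) (u v : Hom A B), is_coequalizer u v q.

Definition regular_category : Prop :=
  (exists T : C, is_terminal T) /\
  (forall A B Z (f : Hom A Z) (g : Hom B Z),
      exists P (p1 : Hom P A) (p2 : Hom P B), is_pullback f g p1 p2) /\
  (forall A Z (f : Hom A Z) K (p1 p2 : Hom K A), is_pullback f f p1 p2 ->
      exists Q (q : Hom A Q), is_coequalizer p1 p2 q) /\
  (forall A B Z (f : Hom A Z) (g : Hom B Z) P (p1 : Hom P A) (p2 : Hom P B),
      is_pullback f g p1 p2 -> is_regular_epi f -> is_regular_epi p2).

Definition split_epi_class :=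
  forall X Y : C, Hom X Y -> Hom Y X -> Prop.

Definition fibrational (Sig : split_epi_class) : Prop :=
  (forall X Y (f : Hom X Y) (s : Hom Y X), Sig X Y f s -> f ∘ s = idm Y) /\
  (forall X Y (f : Hom X Y) (s : Hom Y X), f ∘ s = idm Y -> is_iso f ->
      Sig X Y f s) /\
  (forall X Y (f : Hom X Y) (s : Hom Y X), Sig X Y f s ->
     forall Y' (g : Hom Y' Y) X' (pi1 : Hom X' Y') (pi2 : Hom X' X),
       is_pullback g f pi1 pi2 ->
       forall s' : Hom Y' X', pi1 ∘ s' = idm Y' -> pi2 ∘ s' = s ∘ g ->
         Sig X' Y' pi1 s').

Definition jointly_extremally_epic {A B Z : C} (a : Hom A Z) (b : Hom B Z)
  : Prop :=
  forall M (m : Hom M Z) (a' : Hom A M) (b' : Hom B M),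
    is_mono m -> m ∘ a' = a -> m ∘ b' = b -> is_iso m.

Definition Sigma_Maltsev (Sig : split_epi_class) : Prop :=
  forall X Y (f : Hom X Y) (s : Hom Y X), Sig X Y f s ->
  forall Y' (g : Hom Y' Y) (t : Hom Y Y'), g ∘ t = idm Y ->
  forall X' (pi1 : Hom X' Y') (pi2 : Hom X' X), is_pullback g f pi1 pi2 ->
  forall (s' : Hom Y' X') (tb : Hom X X'),
    pi1 ∘ s' = idm Y' -> pi2 ∘ s' = s ∘ g ->
    pi1 ∘ tb = t ∘ f -> pi2 ∘ tb = idm X ->
    jointly_extremally_epic s' tb.

(* A relation on X: a jointly monic pair (d0, d1) : S -> X
   (equivalently, a monomorphism (d0,d1) : S >-> X x X). *)
Definition jointly_monic {S X Y : C} (d0 : Hom S X) (d1 : Hom S Y) : Prop :=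
  forall Z (u v : Hom Z S), d0 ∘ u = d0 ∘ v -> d1 ∘ u = d1 ∘ v -> u = v.

Definition is_relation {S X : C} (d0 d1 : Hom S X) : Prop :=
  jointly_monic d0 d1.

Definition reflexive_relation_with {S X : C} (d0 d1 : Hom S X)
    (s0 : Hom X S) : Prop :=
  is_relation d0 d1 /\ d0 ∘ s0 = idm X /\ d1 ∘ s0 = idm X.

Definition reflexive_relation {S X : C} (d0 d1 : Hom S X) : Prop :=
  exists s0 : Hom X S, reflexive_relation_with d0 d1 s0.

Definition symmetric_relation {S X : C} (d0 d1 : Hom S X) : Prop :=
  is_relation d0 d1 /\
  exists sg : Hom S S, d0 ∘ sg = d1 /\ d1 ∘ sg = d0.

Definition transitive_relation {S X : C} (d0 d1 : Hom S X) : Prop :=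
  is_relation d0 d1 /\
  forall P (p q : Hom P S), is_pullback d1 d0 p q ->
    exists t : Hom P S, d0 ∘ t = d0 ∘ p /\ d1 ∘ t = d1 ∘ q.

Definition equivalence_relation {S X : C} (d0 d1 : Hom S X) : Prop :=
  reflexive_relation d0 d1 /\ symmetric_relation d0 d1 /\
  transitive_relation d0 d1.

Definition Sigma_relation (Sig : split_epi_class) {S X : C}
    (d0 d1 : Hom S X) : Prop :=
  exists s0 : Hom X S, reflexive_relation_with d0 d1 s0 /\ Sig S X d0 s0.

Definition Sigma_equivalence_relation (Sig : split_epi_class) {S X : C}
    (d0 d1 : Hom S X) : Prop :=
  equivalence_relation d0 d1 /\ Sigma_relation Sig d0 d1.

(* (I, r0, r1) is the direct image f(S) of the relation (d0,d1) : S -> X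
   along f : X -> Y: the (regular epi, mono) factorization
   S --e-->> I >--(r0,r1)--> Y x Y of (f d0, f d1). *)
Definition direct_image {S X Y I : C} (d0 d1 : Hom S X) (f : Hom X Y)
    (e : Hom S I) (r0 r1 : Hom I Y) : Prop :=
  is_regular_epi e /\ jointly_monic r0 r1 /\
  r0 ∘ e = f ∘ d0 /\ r1 ∘ e = f ∘ d1.

End Defs.


(* Write Y' = S ×_Y X for the pairs (s, x) with f d1 s = f x; the projection
   Y' → X is split by (s0, 1). Pulling the Σ-split epi (d0, s0) back along it
   gives the object X' of triples (s, x, s'') with f d1 s = f x = f d0 s'', and
   the Σ-Mal'tsev property makes its two canonical sections jointly extremally
   epic. Both sections land in the preimage of f(S) under
   (s, x, s'') ↦ (f d0 s, f d1 s''), so that preimage is all of X': every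
   pair s, s'' with f d1 s = f d0 s'' gives (f d0 s, f d1 s'') ∈ f(S).
   Composable pairs of f(S) lift to such pairs along the regular epi S ↠ f(S),
   which gives transitivity; reflexivity and symmetry descend along f and
   S ↠ f(S). *)

Section Basics.
Context {C : Category}.

Lemma compA {A B D E : C} (h : Hom D E) (g : Hom B D) (f : Hom A B) :
  h ∘ (g ∘ f) = h ∘ g ∘ f.
Proof. apply comp_assoc. Qed.

Lemma pullback_jointly_monic {A B Z P : C} (f : Hom A Z) (g : Hom B Z)
    (p1 : Hom P A) (p2 : Hom P B) :
  is_pullback f g p1 p2 -> jointly_monic p1 p2.
Proof.
  intros [Hsq Huniv] W u v E1 E2.
  destruct (Huniv W (p1 ∘ v) (p2 ∘ v)) as [w [_ [_ Hw]]].
  - rewrite !compA, Hsq; reflexivity.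
  - rewrite (Hw u E1 E2), (Hw v eq_refl eq_refl); reflexivity.
Qed.

Lemma regular_epi_cancel {B Q : C} (q : Hom B Q) :
  is_regular_epi q -> forall Z (g h : Hom Q Z), g ∘ q = h ∘ q -> g = h.
Proof.
  intros [A [u [v [Hq Huniv]]]] Z g h E.
  assert (Hg : g ∘ q ∘ u = g ∘ q ∘ v) by (rewrite <- !compA, Hq; reflexivity).
  destruct (Huniv Z (g ∘ q) Hg) as [k [_ Hk]].
  rewrite (Hk g eq_refl), (Hk h (eq_sym E)); reflexivity.
Qed.

Lemma regular_epi_lift {A B M Z0 Z1 : C} (c : Hom A B)
    (m0 : Hom M Z0) (m1 : Hom M Z1) (h : Hom A M) (v0 : Hom B Z0) (v1 : Hom B Z1) :
  is_regular_epi c -> jointly_monic m0 m1 ->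
  m0 ∘ h = v0 ∘ c -> m1 ∘ h = v1 ∘ c ->
  exists k : Hom B M, m0 ∘ k = v0 /\ m1 ∘ k = v1.
Proof.
  intros Hc Hm E0 E1.
  pose proof (regular_epi_cancel c Hc) as Hcancel.
  destruct Hc as [K [u [v [Hcq Huniv]]]].
  assert (Hh : h ∘ u = h ∘ v).
  { apply Hm; rewrite !compA, ?E0, ?E1, <- !compA, Hcq; reflexivity. }
  destruct (Huniv M h Hh) as [k [Hk _]].
  exists k; split; apply Hcancel; rewrite <- compA, Hk; assumption.
Qed.

Definition is_product {A B P : C} (p0 : Hom P A) (p1 : Hom P B) : Prop :=
  jointly_monic p0 p1 /\
  forall Z (a : Hom Z A) (b : Hom Z B), exists u : Hom Z P, p0 ∘ u = a /\ p1 ∘ u = b.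

Lemma terminal_pullback_is_product {A B T P : C} (tA : Hom A T) (tB : Hom B T)
    (p0 : Hom P A) (p1 : Hom P B) :
  is_terminal T -> is_pullback tA tB p0 p1 -> is_product p0 p1.
Proof.
  intros HT Hpb; split; [exact (pullback_jointly_monic _ _ _ _ Hpb)|].
  intros Z a b; destruct Hpb as [_ Huniv].
  destruct (HT Z) as [tZ HtZ].
  destruct (Huniv Z a b) as [u [Ua [Ub _]]].
  - rewrite (HtZ (tA ∘ a)), (HtZ (tB ∘ b)); reflexivity.
  - exists u; split; assumption.
Qed.

Lemma direct_image_reflexive {S X Y I : C} (d0 d1 : Hom S X) (f : Hom X Y)
    (e : Hom S I) (r0 r1 : Hom I Y) :
  is_regular_epi f -> direct_image d0 d1 f e r0 r1 ->
  reflexive_relation d0 d1 -> reflexive_relation r0 r1.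
Proof.
  intros Hf [_ [Hr [Er0 Er1]]] [s0 [_ [Hs00 Hs01]]].
  destruct (regular_epi_lift f r0 r1 (e ∘ s0) (idm Y) (idm Y) Hf Hr) as [k [K0 K1]].
  - rewrite compA, Er0, <- compA, Hs00, comp_idr, comp_idl; reflexivity.
  - rewrite compA, Er1, <- compA, Hs01, comp_idr, comp_idl; reflexivity.
  - exists k; repeat split; assumption.
Qed.

Lemma direct_image_symmetric {S X Y I : C} (d0 d1 : Hom S X) (f : Hom X Y)
    (e : Hom S I) (r0 r1 : Hom I Y) :
  direct_image d0 d1 f e r0 r1 -> symmetric_relation d0 d1 -> symmetric_relation r0 r1.
Proof.
  intros [He [Hr [Er0 Er1]]] [_ [sg [Sg0 Sg1]]].
  destruct (regular_epi_lift e r0 r1 (e ∘ sg) r1 r0 He Hr) as [k [K0 K1]].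
  - rewrite compA, Er0, <- compA, Sg0, Er1; reflexivity.
  - rewrite compA, Er1, <- compA, Sg1, Er0; reflexivity.
  - split; [exact Hr | exists k; split; assumption].
Qed.

End Basics.

Section Finite_limits.
Context {C : Category}.
Hypothesis has_terminal : exists T : C, is_terminal T.
Hypothesis has_pullbacks : forall (A B Z : C) (f : Hom A Z) (g : Hom B Z),
  exists P (p1 : Hom P A) (p2 : Hom P B), is_pullback f g p1 p2.

Lemma has_products (A B : C) :
  exists P (p0 : Hom P A) (p1 : Hom P B), is_product p0 p1.
Proof.
  destruct has_terminal as [T HT].
  destruct (HT A) as [tA _], (HT B) as [tB _].
  destruct (has_pullbacks _ _ _ tA tB) as [P [p0 [p1 Hpb]]].
  exists P, p0, p1; exact (terminal_pullback_is_product _ _ _ _ HT Hpb).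
Qed.

Lemma relation_preimage {W I Y : C} (a0 a1 : Hom W Y) (r0 r1 : Hom I Y) :
  jointly_monic r0 r1 ->
  exists M (m : Hom M W) (i : Hom M I),
    is_mono m /\ a0 ∘ m = r0 ∘ i /\ a1 ∘ m = r1 ∘ i /\
    forall Z (w : Hom Z W) (j : Hom Z I), a0 ∘ w = r0 ∘ j -> a1 ∘ w = r1 ∘ j ->
      exists u : Hom Z M, m ∘ u = w.
Proof.
  intros Hr.
  destruct (has_products Y Y) as [YY [p0 [p1 [Hp Hpair]]]].
  destruct (Hpair W a0 a1) as [a [A0 A1]], (Hpair I r0 r1) as [r [R0 R1]].
  destruct (has_pullbacks _ _ _ a r) as [M [m [i Hpb]]].
  pose proof (pullback_jointly_monic _ _ _ _ Hpb) as Hmi.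
  destruct Hpb as [Hsq Huniv].
  assert (E0 : a0 ∘ m = r0 ∘ i) by (rewrite <- A0, <- R0, <- !compA, Hsq; reflexivity).
  assert (E1 : a1 ∘ m = r1 ∘ i) by (rewrite <- A1, <- R1, <- !compA, Hsq; reflexivity).
  exists M, m, i; split; [|split; [exact E0|split; [exact E1|]]].
  - intros Z u v Euv; apply Hmi; [exact Euv|].
    apply Hr; rewrite !compA, <- ?E0, <- ?E1, <- !compA, Euv; reflexivity.
  - intros Z w j Ew0 Ew1.
    destruct (Huniv Z w j) as [u [Uw _]].
    + apply Hp; rewrite !compA, ?A0, ?A1, ?R0, ?R1; assumption.
    + exists u; exact Uw.
Qed.

Lemma jointly_extremally_epic_factor {A B W I Y : C} (s : Hom A W) (t : Hom B W)
    (a0 a1 : Hom W Y) (r0 r1 : Hom I Y) :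
  jointly_extremally_epic s t -> jointly_monic r0 r1 ->
  (exists j : Hom A I, a0 ∘ s = r0 ∘ j /\ a1 ∘ s = r1 ∘ j) ->
  (exists j : Hom B I, a0 ∘ t = r0 ∘ j /\ a1 ∘ t = r1 ∘ j) ->
  exists h : Hom W I, r0 ∘ h = a0 /\ r1 ∘ h = a1.
Proof.
  intros Hst Hr [js [Js0 Js1]] [jt [Jt0 Jt1]].
  destruct (relation_preimage a0 a1 r0 r1 Hr) as [M [m [i [Hm [E0 [E1 Hfactor]]]]]].
  destruct (Hfactor A s js Js0 Js1) as [s' Hs'].
  destruct (Hfactor B t jt Jt0 Jt1) as [t' Ht'].
  destruct (Hst M m s' t' Hm Hs' Ht') as [n [_ Hmn]].
  exists (i ∘ n); split;
    rewrite compA, <- ?E0, <- ?E1, <- compA, Hmn, comp_idr; reflexivity.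
Qed.

End Finite_limits.

Section Direct_image.
Context {C : Category}.
Hypothesis has_terminal : exists T : C, is_terminal T.
Hypothesis has_pullbacks : forall (A B Z : C) (f : Hom A Z) (g : Hom B Z),
  exists P (p1 : Hom P A) (p2 : Hom P B), is_pullback f g p1 p2.
Variable Sig : @split_epi_class C.
Hypothesis Sig_Maltsev : Sigma_Maltsev Sig.
Variables (X Y S I : C) (f : Hom X Y) (d0 d1 : Hom S X) (e : Hom S I) (r0 r1 : Hom I Y).
Hypothesis image : direct_image d0 d1 f e r0 r1.
Hypothesis S_Sigma : Sigma_relation Sig d0 d1.

Lemma direct_image_composite (Z : C) (u w : Hom Z S) :
  f ∘ d1 ∘ u = f ∘ d0 ∘ w ->
  exists j : Hom Z I, r0 ∘ j = f ∘ d0 ∘ u /\ r1 ∘ j = f ∘ d1 ∘ w.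
Proof.
  intros Huw.
  destruct image as [_ [Hr [Er0 Er1]]].
  destruct S_Sigma as [s0 [[_ [Hs00 Hs01]] Hsig]].
  destruct (has_pullbacks _ _ _ (f ∘ d1) f) as [Y' [y1 [y2 [Hy Hyu]]]].
  destruct (Hyu X s0 (idm X)) as [t [Ht1 [Ht2 _]]].
  { rewrite <- compA, Hs01, !comp_idr; reflexivity. }
  destruct (has_pullbacks _ _ _ y2 d0) as [X' [pi1 [pi2 HX']]].
  pose proof HX' as [_ Hxu].
  destruct (Hxu Y' (idm Y') (s0 ∘ y2)) as [s' [Hs'1 [Hs'2 _]]].
  { rewrite comp_idr, compA, Hs00, comp_idl; reflexivity. }
  destruct (Hxu S (t ∘ d0) (idm S)) as [tb [Htb1 [Htb2 _]]].
  { rewrite compA, Ht2, comp_idl, comp_idr; reflexivity. }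
  pose proof (Sig_Maltsev S X d0 s0 Hsig Y' y2 t Ht2 X' pi1 pi2 HX' s' tb
                Hs'1 Hs'2 Htb1 Htb2) as Hext.
  destruct (jointly_extremally_epic_factor has_terminal has_pullbacks s' tb
              (f ∘ d0 ∘ y1 ∘ pi1) (f ∘ d1 ∘ pi2) r0 r1 Hext Hr) as [h [Hh0 Hh1]].
  - exists (e ∘ y1); split.
    + rewrite <- (compA _ pi1 s'), Hs'1, comp_idr, compA, Er0; reflexivity.
    + rewrite <- (compA _ pi2 s'), Hs'2, compA, <- (compA f d1 s0), Hs01, comp_idr,
        <- Hy, compA, Er1; reflexivity.
  - exists e; split.
    + rewrite <- (compA _ pi1 tb), Htb1, compA, <- (compA _ y1 t), Ht1,
        <- (compA f d0 s0), Hs00, comp_idr, Er0; reflexivity.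
    + rewrite <- (compA _ pi2 tb), Htb2, comp_idr, Er1; reflexivity.
  - destruct (Hyu Z u (d0 ∘ w)) as [z' [Hz'1 [Hz'2 _]]].
    { rewrite Huw, compA; reflexivity. }
    destruct (Hxu Z z' w Hz'2) as [z [Hz1 [Hz2 _]]].
    exists (h ∘ z); split.
    + rewrite compA, Hh0, <- (compA _ pi1 z), Hz1, <- (compA _ y1 z'), Hz'1; reflexivity.
    + rewrite compA, Hh1, <- (compA _ pi2 z), Hz2; reflexivity.
Qed.

Hypothesis regular_epi_pullback_stable :
  forall (A B Z : C) (g : Hom A Z) (h : Hom B Z) P (p1 : Hom P A) (p2 : Hom P B),
    is_pullback g h p1 p2 -> is_regular_epi g -> is_regular_epi p2.

Lemma direct_image_transitive : transitive_relation r0 r1.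
Proof.
  destruct image as [He [Hr [Er0 Er1]]].
  split; [exact Hr|].
  intros P p q [Hpq _].
  destruct (has_pullbacks _ _ _ e p) as [P1 [u1 [c1 Hpb1]]].
  pose proof (regular_epi_pullback_stable _ _ _ _ _ _ _ _ Hpb1 He) as Hc1.
  destruct Hpb1 as [Hu1 _].
  destruct (has_pullbacks _ _ _ e (q ∘ c1)) as [P2 [u2 [c2 Hpb2]]].
  pose proof (regular_epi_pullback_stable _ _ _ _ _ _ _ _ Hpb2 He) as Hc2.
  destruct Hpb2 as [Hu2 _].
  destruct (direct_image_composite P2 (u1 ∘ c2) u2) as [j [J0 J1]].
  { rewrite <- Er1, <- Er0, <- !compA, (compA e), Hu1, Hu2, !compA, Hpq; reflexivity. }
  destruct (regular_epi_lift c2 r0 r1 j (r0 ∘ p ∘ c1) (r1 ∘ q ∘ c1) Hc2 Hr)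
    as [k [K0 K1]].
  - rewrite J0, <- Er0, <- !compA, (compA e), Hu1, !compA; reflexivity.
  - rewrite J1, <- Er1, <- compA, Hu2, !compA; reflexivity.
  - destruct (regular_epi_lift c1 r0 r1 k (r0 ∘ p) (r1 ∘ q) Hc1 Hr K0 K1)
      as [t [T0 T1]].
    exists t; split; assumption.
Qed.

End Direct_image.

Theorem theorem7p8 (C : Category) (Sig : @split_epi_class C) :
  @regular_category C -> fibrational Sig -> Sigma_Maltsev Sig ->
  forall (X Y : C) (f : Hom X Y), is_regular_epi f ->
  forall (S : C) (d0 d1 : Hom S X),
  forall (I : C) (e : Hom S I) (r0 r1 : Hom I Y),
    direct_image d0 d1 f e r0 r1 ->
    (Sigma_relation Sig d0 d1 -> transitive_relation r0 r1) /\
    (Sigma_equivalence_relation Sig d0 d1 -> equivalence_relation r0 r1).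
Proof.
  intros [Hterm [Hpb [_ Hstable]]] _ HM X Y f Hf S d0 d1 I e r0 r1 Himage.
  assert (Htrans : Sigma_relation Sig d0 d1 -> transitive_relation r0 r1).
  { intros HS; eapply direct_image_transitive; eassumption. }
  split; [exact Htrans|].
  intros [[Hrefl [Hsym _]] HS].
  split; [|split].
  - exact (direct_image_reflexive d0 d1 f e r0 r1 Hf Himage Hrefl).
  - exact (direct_image_symmetric d0 d1 f e r0 r1 Himage Hsym).
  - exact (Htrans HS).
Qed.
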